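(* Consider the algorithm MF-PSRO(Nash) run on a discrete mean-field game (setting in the context): start with $\Pi_1=\{\pi_1\}$ for some $\pi_1\in\Pi$ and $\nu_1=\delta_{\pi_1}$; at step $n$, pick $\pi^{new}\in\arg\max_{\pi\in\Pi}J(\pi,\mu(\nu_n))$ and set $\Pi_{n+1}=\Pi_n\cup\{\pi^{new}\}$; if $\Pi_{n+1}=\Pi_n$ the algorithm terminates, otherwise it sets $\nu_{n+1}\in\arg\min_{\nu\in\Delta(\Pi_{n+1})}\max_{\pi_i\in\Pi_{n+1}}\big(J(\pi_i,\mu(\nu))-J(\pi(\nu),\mu(\nu))\big)$ and continues. Suppose the algorithm terminates at step $n$ and $\nu_n$ is a restricted mean-field Nash equilibrium for $\Pi_n$, i.e. $J(\pi_i,\mu(\nu_n))\le J(\pi(\nu_n),\mu(\nu_n))$ for all $\pi_i\in\Pi_n$. Then $\pi(\nu_n)$ is a mean-field Nash equilibrium of the full game: $J(\pi,\mu(\nu_n))\le J(\pi(\nu_n),\mu(\nu_n))$ for all $\pi\in\Pi$.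
   Context: A discrete mean-field game consists of a finite state set $\mathcal X$, a finite action set $\mathcal A$, a reward $r:\mathcal X\times\mathcal A\times\Delta(\mathcal X)\to\mathbb R$, transition probabilities $p(x'\mid x,a)$ not depending on the population distribution, and an initial distribution $\mu_0\in\Delta(\mathcal X)$. A policy is a map $\pi:\mathcal X\to\Delta(\mathcal A)$; $\Pi$ is the finite set of deterministic policies. $\mu^\pi$ denotes the state occupancy measure of policy $\pi$ (either $\gamma$-discounted, $\mu^\pi(x)=\mu_0(x)+\gamma\sum_{x',a}p(x\mid x',a)\pi(x',a)\mu^\pi(x')$, or finite-horizon with time in the state). The expected payoff is $J(\pi,\mu)=\sum_{x,a}\mu^\pi(x)\pi(x,a)r(x,a,\mu)$. For a distribution $\nu$ over a finite set of policies, $\mu(\nu)=\sum_\pi\nu(\pi)\mu^\pi$, and $\pi(\nu)$ is the policy that samples a policy from $\nu$ at the start and plays it throughout, so $J(\pi(\nu),\mu)=\sum_\pi\nu(\pi)J(\pi,\mu)$ and $\mu^{\pi(\nu)}=\mu(\nu)$. *)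

From HB Require Import structures.
From mathcomp Require Import all_boot all_order all_algebra.
Set Implicit Arguments. Unset Strict Implicit. Unset Printing Implicit Defensive.
Import Order.TTheory GRing.Theory Num.Theory.
Local Open Scope ring_scope.

(* Deterministic policies X -> A (the finite set Pi of the paper). *)
Definition dpol (X A : finType) := {ffun X -> A}.

Definition dpol_prob (X A : finType) (R : numDomainType) (pi : dpol X A) (x : X) (a : A) : R :=
  (a == pi x)%:R.

Definition is_occupancy (X A : finType) (R : numDomainType) (gamma : R)
  (p : X -> A -> X -> R) (mu0 : X -> R) (pi : dpol X A) (mu : {ffun X -> R}) : Prop :=
  forall x, mu x = mu0 x + gamma * \sum_(x' : X) \sum_(a : A) p x' a x * dpol_prob R pi x' a * mu x'.

Definition Jdet (X A : finType) (R : numDomainType)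
  (occ : dpol X A -> {ffun X -> R}) (r : X -> A -> {ffun X -> R} -> R)
  (pi : dpol X A) (mu : {ffun X -> R}) : R :=
  \sum_(x : X) \sum_(a : A) occ pi x * dpol_prob R pi x a * r x a mu.

Definition distr_on (X A : finType) (R : numDomainType) (S : {set dpol X A})
  (nu : {ffun dpol X A -> R}) : Prop :=
  (forall q, 0 <= nu q) /\ (forall q, q \notin S -> nu q = 0) /\ \sum_q nu q = 1.

Definition mu_of (X A : finType) (R : numDomainType)
  (occ : dpol X A -> {ffun X -> R}) (nu : {ffun dpol X A -> R}) : {ffun X -> R} :=
  [ffun x => \sum_q nu q * occ q x].

(* J(pi(nu), mu) = sum_pi nu(pi) J(pi, mu) *)
Definition Jmix (X A : finType) (R : numDomainType)
  (occ : dpol X A -> {ffun X -> R}) (r : X -> A -> {ffun X -> R} -> R)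
  (nu : {ffun dpol X A -> R}) (mu : {ffun X -> R}) : R :=
  \sum_q nu q * Jdet occ r q mu.

Definition dirac_pol (X A : finType) (R : numDomainType) (pi : dpol X A) : {ffun dpol X A -> R} :=
  [ffun q => (q == pi)%:R].

Definition gap (X A : finType) (R : numDomainType)
  (occ : dpol X A -> {ffun X -> R}) (r : X -> A -> {ffun X -> R} -> R)
  (nu : {ffun dpol X A -> R}) (pi_i : dpol X A) : R :=
  Jdet occ r pi_i (mu_of occ nu) - Jmix occ r nu (mu_of occ nu).

(* nu in argmin_{nu' in Delta(S)} max_{pi_i in S} gap_i(nu'), with
   "max_i f i <= max_j g j" written out as "forall i in S, exists j in S, f i <= g j"
   (S is nonempty). *)
Definition is_argmin_expl (X A : finType) (R : numDomainType)
  (occ : dpol X A -> {ffun X -> R}) (r : X -> A -> {ffun X -> R} -> R)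
  (S : {set dpol X A}) (nu : {ffun dpol X A -> R}) : Prop :=
  distr_on S nu /\
  forall nu', distr_on S nu' ->
    forall i, i \in S -> exists2 j, j \in S & gap occ r nu i <= gap occ r nu' j.

Definition is_best_response (X A : finType) (R : numDomainType)
  (occ : dpol X A -> {ffun X -> R}) (r : X -> A -> {ffun X -> R} -> R)
  (nu : {ffun dpol X A -> R}) (pnew : dpol X A) : Prop :=
  forall pi : dpol X A, Jdet occ r pi (mu_of occ nu) <= Jdet occ r pnew (mu_of occ nu).

(* A run of MF-PSRO(Nash) (steps numbered 1..n) that terminates at step n:
   Pi k = Pi_k, nu k = nu_k, pnew k = the best response chosen at step k. *)
Definition MFPSRO_run_terminating (X A : finType) (R : numDomainType)
  (occ : dpol X A -> {ffun X -> R}) (r : X -> A -> {ffun X -> R} -> R)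
  (pi1 : dpol X A) (Pi : nat -> {set dpol X A}) (nu : nat -> {ffun dpol X A -> R})
  (pnew : nat -> dpol X A) (n : nat) : Prop :=
  [/\ (1 <= n)%N /\ Pi 1%N = [set pi1], nu 1%N = dirac_pol R pi1,
      (forall k, (1 <= k <= n)%N -> is_best_response occ r (nu k) (pnew k)),
      (forall k, (1 <= k < n)%N ->
         [/\ Pi k.+1 = pnew k |: Pi k, Pi k.+1 != Pi k & is_argmin_expl occ r (Pi k.+1) (nu k.+1)])
    & pnew n |: Pi n = Pi n].

Definition restricted_MFNE (X A : finType) (R : numDomainType)
  (occ : dpol X A -> {ffun X -> R}) (r : X -> A -> {ffun X -> R} -> R)
  (S : {set dpol X A}) (nu : {ffun dpol X A -> R}) : Prop :=
  forall pi_i, pi_i \in S -> Jdet occ r pi_i (mu_of occ nu) <= Jmix occ r nu (mu_of occ nu).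

From HB Require Import structures.
From mathcomp Require Import all_boot all_order all_algebra.
Import Order.TTheory GRing.Theory Num.Theory.
Local Open Scope ring_scope.

(* At termination the last best response already lies in the restricted policy
   set, so its value, which dominates every policy, is itself dominated by the
   value of the restricted equilibrium. Nothing about the dynamics or the
   occupancy measures is used. *)

Lemma restricted_MFNE_best_response (X A : finType) (R : realFieldType)
    (occ : dpol X A -> {ffun X -> R}) (r : X -> A -> {ffun X -> R} -> R)
    (S : {set dpol X A}) (nu : {ffun dpol X A -> R}) (br : dpol X A) :
  is_best_response occ r nu br -> br \in S -> restricted_MFNE occ r S nu ->
  forall pi, Jdet occ r pi (mu_of occ nu) <= Jmix occ r nu (mu_of occ nu).
Proof. by move=> best_br br_S eqS pi; apply: le_trans (best_br pi) (eqS _ br_S). Qed.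

Lemma MFPSRO_terminating_best_response (X A : finType) (R : numDomainType)
    (occ : dpol X A -> {ffun X -> R}) (r : X -> A -> {ffun X -> R} -> R)
    (pi1 : dpol X A) (Pi : nat -> {set dpol X A}) (nu : nat -> {ffun dpol X A -> R})
    (pnew : nat -> dpol X A) (n : nat) :
  MFPSRO_run_terminating occ r pi1 Pi nu pnew n ->
  is_best_response occ r (nu n) (pnew n) /\ pnew n \in Pi n.
Proof.
case=> [[n_gt0 _] _ best _ stop]; split; first by apply: best; rewrite n_gt0 leqnn.
by rewrite -stop setU11.
Qed.

Theorem mainTheorem2 (R : realFieldType) (X A : finType)
  (gamma : R) (p : X -> A -> X -> R) (mu0 : X -> R)
  (r : X -> A -> {ffun X -> R} -> R)
  (occ : dpol X A -> {ffun X -> R})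
  (pi1 : dpol X A) (Pi : nat -> {set dpol X A}) (nu : nat -> {ffun dpol X A -> R})
  (pnew : nat -> dpol X A) (n : nat) :
  0 <= gamma -> gamma < 1 ->
  (forall x a x', 0 <= p x a x') -> (forall x a, \sum_(x' : X) p x a x' = 1) ->
  (forall x, 0 <= mu0 x) -> \sum_(x : X) mu0 x = 1 ->
  (forall pi : dpol X A, is_occupancy gamma p mu0 pi (occ pi)) ->
  MFPSRO_run_terminating occ r pi1 Pi nu pnew n ->
  restricted_MFNE occ r (Pi n) (nu n) ->
  forall pi : dpol X A, Jdet occ r pi (mu_of occ (nu n)) <= Jmix occ r (nu n) (mu_of occ (nu n)).
Proof.
move=> _ _ _ _ _ _ _ /MFPSRO_terminating_best_response[best_n new_in_Pi] eqPi.
exact: restricted_MFNE_best_response best_n new_in_Pi eqPi.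
Qed.
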